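(* Let $(t_n)_{n\ge1}$ be $\mathbb N$-valued random variables on a probability space, adapted to a filtration $(\mathcal F_n)_{n\ge0}$ (i.e. $t_n$ is $\mathcal F_n$-measurable), and let $p\colon\mathbb N\to[0,1]$ be such that $\mathbb P[t_n=T\mid\mathcal F_{n-1}]\le p(T)$ for all $n,T$, and $R:=\sum_{T=1}^\infty Tp(T)<\infty$. Then $\limsup_{n\to\infty}\frac1n\sum_{k=1}^nt_k\le R$ almost surely. *)

From HB Require Import structures.
From mathcomp Require Import all_boot all_order all_algebra.
From mathcomp Require Import all_classical all_reals all_analysis.
Set Implicit Arguments. Unset Strict Implicit. Unset Printing Implicit Defensive.
Import Order.TTheory GRing.Theory Num.Theory.
Local Open Scope classical_set_scope.
Local Open Scope ring_scope.

Definition is_filtration d (T : measurableType d) (F : nat -> set (set T)) :=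
  (forall n, sigma_algebra setT (F n)) /\
  (forall n, F n `<=` measurable) /\
  (forall n, F n `<=` F n.+1).

(* t_n : T -> nat is F_n-measurable (nat carries the discrete sigma-algebra),
   for every n >= 1. *)
Definition adapted_from1 d (T : measurableType d) (F : nat -> set (set T))
    (t : nat -> T -> nat) :=
  forall n, (1 <= n)%N -> forall B : set nat, F n (t n @^-1` B).

(* P[t_n = k | F_{n-1}] <= p k  a.s., expressed through the defining property
   of conditional probability: for every A in F_{n-1},
   P(A /\ {t_n = k}) = E[1_A P[t_n = k | F_{n-1}]] <= p k * P(A). *)
Definition cond_prob_bound d (T : measurableType d) (R : realType)
    (P : probability T R) (F : nat -> set (set T)) (t : nat -> T -> nat)
    (p : nat -> R) :=
  forall n, (1 <= n)%N -> forall k : nat, forall A, F n.-1 A ->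
    (P (A `&` [set w | t n w = k]) <= (p k)%:E * P A)%E.

(* Truncate: Y_n := t_n 1_{t_n <= n} and S_n := Y_1 + ... + Y_n.  Since
   P[t_k > k] <= sum_{i > k} p(i) and sum_k sum_{i > k} p(i) = R < oo,
   Borel-Cantelli gives t_k = Y_k for all large k, almost surely.  The bound on
   the conditional law gives E[Y_{n+1} | F_n] <= R and E[Y_{n+1}^2] <= v(n+1),
   where v(n) := sum_{y <= n} y^2 p(y); expanding the square of the positive
   part yields E[((S_n - nR)^+)^2] <= n (v(n) + R^2), hence by Chebyshev
   P[S_n > n(R + e)] <= (v(n) + R^2) / (n e^2).  Along an integer sequence n_j
   growing geometrically with ratio about 1 + 1/(m+1), sum_j v(n_j)/n_j is at
   most (m+2) R, so Borel-Cantelli again gives S_{n_j} <= n_j (R + 1/(m+1))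
   eventually, almost surely, and interpolating between consecutive n_j gives
   limsup S_n / n <= R. *)

From HB Require Import structures.
From mathcomp Require Import all_boot all_order all_algebra.
From mathcomp Require Import all_classical all_reals all_analysis.
From mathcomp Require Import lra zify ring.
Import Order.TTheory GRing.Theory Num.Theory.
Set Implicit Arguments. Unset Strict Implicit. Unset Printing Implicit Defensive.
Local Open Scope classical_set_scope.
Local Open Scope ring_scope.

Section sigma_algebra_closure.
Variables (T : Type) (G : set (set T)).
Hypothesis saG : sigma_algebra setT G.

Lemma sa_set0 : G set0. Proof. by case: saG. Qed.

Lemma sa_setC A : G A -> G (~` A).
Proof. by case: saG => _ GC _ /GC; rewrite setTD. Qed.

Lemma sa_setT : G setT. Proof. by rewrite -setC0; apply: sa_setC sa_set0. Qed.

Lemma sa_bigcup (A : (set T)^nat) : (forall n, G (A n)) -> G (\bigcup_n A n).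
Proof. by case: saG => _ _; apply. Qed.

Lemma sa_setI A B : G A -> G B -> G (A `&` B).
Proof.
move=> GA GB; rewrite -(setCK (A `&` B)) setCI -bigcup2E; apply/sa_setC/sa_bigcup.
by case=> [|[|n]] /=; [exact: sa_setC|exact: sa_setC|exact: sa_set0].
Qed.

End sigma_algebra_closure.

Section filtration.
Context d (T : measurableType d) (F : nat -> set (set T)).
Hypothesis hF : is_filtration F.

Lemma filtration_sigma n : sigma_algebra setT (F n).
Proof. by case: hF. Qed.

Lemma filtration_measurable n A : F n A -> measurable A.
Proof. by case: hF => _ [+ _]; apply. Qed.

Lemma filtration_homo m n A : (m <= n)%N -> F m A -> F n A.
Proof.
move=> /subnK <-; elim: (n - m)%N => [//|k IH] /IH.
by case: hF => _ [_ FS]; rewrite addSn; apply: FS.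
Qed.

End filtration.

Section real_probability.
Context d (T : measurableType d) (R : realType) (P : probability T R).

Definition pr (A : set T) : R := fine (P A).

Lemma prE A : measurable A -> P A = (pr A)%:E.
Proof.
move=> mA; rewrite /pr fineK// ge0_fin_numE//.
by rewrite (le_lt_trans (probability_le1 P mA)) ?ltey.
Qed.

Lemma pr_ge0 A : 0 <= pr A.
Proof. by rewrite /pr fine_ge0. Qed.

Lemma pr_le A B : measurable A -> measurable B -> A `<=` B -> pr A <= pr B.
Proof.
by move=> mA mB AB; rewrite -lee_fin -!prE//; apply: le_measure; rewrite ?inE.
Qed.

Lemma pr0 : pr set0 = 0.
Proof. by rewrite /pr measure0. Qed.

Lemma prT : pr setT = 1.
Proof. by rewrite /pr probability_setT. Qed.

Lemma pr_sum_fibers (B : set T) (h : T -> nat) (M : nat) :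
  measurable B -> (forall a, measurable [set w | h w = a]) ->
  (forall w, (h w < M)%N) ->
  pr B = \sum_(a < M) pr (B `&` [set w | h w = a]).
Proof.
move=> mB mh hM.
have mBh a : measurable (B `&` [set w | h w = a]) by exact: measurableI.
have tBh : trivIset setT (fun a => B `&` [set w | h w = a]).
  by move=> i j _ _ [w [[_ <-] [_ <-]]].
have BE : B = \big[setU/set0]_(a < M) (B `&` [set w | h w = a]).
  rewrite -(bigcup_mkord M (fun a => B `&` [set w | h w = a])).
  by apply/seteqP; split => [w Bw|w [a _ []]//]; exists (h w) => //=.
apply: EFin_inj; rewrite -sumEFin -prE//.
have := measure_bigsetU P mBh tBh M; rewrite -BE => ->.
by apply: eq_bigr => a _; rewrite -prE.
Qed.

End real_probability.

Section borel_cantelli.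
Context d (T : measurableType d) (R : realType) (mu : {measure set T -> \bar R}).

Lemma ae_eventually_notin (E : (set T)^nat) : (forall n, measurable (E n)) ->
  (\sum_(0 <= n <oo) mu (E n) < +oo)%E -> {ae mu, forall w, \forall n \near \oo, ~ E n w}.
Proof.
move=> mE finE; exists (lim_sup_set E); split; last first.
- move=> w /= Ew n _; apply: contrapT => nEw; apply: Ew; exists n => // j /= nj Ejw.
  by apply: nEw; exists j.
- exact: lim_sup_set_cvg0.
- by apply: bigcapT_measurable => n; apply: bigcup_measurable.
Qed.

End borel_cantelli.

Lemma nneseries_lt_pinfty (R : realType) (u : nat -> R) (C : R) :
  (forall k, 0 <= u k) -> (forall J, \sum_(j < J) u j <= C) ->
  (\sum_(0 <= j <oo) (u j)%:E < +oo)%E.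
Proof.
move=> u0 uC; apply: (@le_lt_trans _ _ C%:E); last exact: ltry.
apply: lime_le; first by apply: is_cvg_nneseries => n _ _; rewrite lee_fin.
by exists 0%N => // J _ /=; rewrite sumEFin lee_fin big_mkord.
Qed.

Fixpoint geom_grid (m j : nat) : nat :=
  if j is j'.+1 then (geom_grid m j' + geom_grid m j' %/ m.+1 + 1)%N else 1%N.

Lemma geom_grid_gt0 m j : (0 < geom_grid m j)%N.
Proof. by case: j => //= j; rewrite addn1. Qed.

Lemma geom_grid_ltS m j : (geom_grid m j < geom_grid m j.+1)%N.
Proof. by rewrite /= addn1 ltnS leq_addr. Qed.

Lemma geom_grid_gt m j : (j < geom_grid m j)%N.
Proof.
by elim: j => [|j IH]; [exact: geom_grid_gt0|exact: leq_ltn_trans IH (geom_grid_ltS m j)].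
Qed.

Lemma geom_grid_homo m : {homo geom_grid m : j k / (j <= k)%N}.
Proof.
move=> j k /subnK <-; elim: (k - j)%N => [//|i IH].
by rewrite addSn (leq_trans IH) // ltnW // geom_grid_ltS.
Qed.

Lemma geom_grid_ratio m j : (m.+2 * geom_grid m j <= m.+1 * geom_grid m j.+1)%N.
Proof.
rewrite /=; set a := geom_grid m j.
have := ltn_ceil a (ltn0Sn m); rewrite mulSn mulnDr mulnDr.
rewrite [(m.+1 * a)%N]mulnC [(m.+1 * (a %/ m.+1))%N]mulnC; lia.
Qed.

Lemma geom_grid_bracket m J n : (geom_grid m J <= n)%N ->
  exists j, [/\ (J <= j)%N, (geom_grid m j <= n)%N & (n < geom_grid m j.+1)%N].
Proof.
move=> Jn; suff : forall i, (n < geom_grid m (J + i))%N ->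
    exists j, [/\ (J <= j)%N, (geom_grid m j <= n)%N & (n < geom_grid m j.+1)%N].
  by apply; apply: leq_ltn_trans (geom_grid_gt m (J + n.+1)); lia.
elim=> [|i IH]; first by rewrite addn0 ltnNge Jn.
have [/IH//|iJn] := ltnP n (geom_grid m (J + i)).
by exists (J + i)%N; rewrite leq_addr -addnS.
Qed.

Section geom_grid_sums.
Variable R : realType.

Lemma inv_le_telescope (M a b : R) : 0 < a -> 0 < b -> (M + 1) * a <= M * b ->
  a^-1 <= (M + 1) * (a^-1 - b^-1).
Proof.
move=> a0 b0 ab; rewrite -subr_ge0.
have -> : (M + 1) * (a^-1 - b^-1) - a^-1 = (M * b - (M + 1) * a) / (a * b).
  by field; rewrite !lt0r_neq0.
by rewrite divr_ge0 ?subr_ge0 // mulr_ge0 // ltW.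
Qed.

(* Telescoping against [j |-> 1 / max y n_j], which drops by at least a factor
   (m+1)/(m+2) at each step where n_j >= y. *)
Lemma sum_inv_geom_grid m (y J : nat) : (0 < y)%N ->
  \sum_(j < J) (if (y <= geom_grid m j)%N then (geom_grid m j)%:R^-1 else 0)
  <= m.+2%:R / y%:R :> R.
Proof.
move=> y0; pose f j : R := (maxn y (geom_grid m j))%:R^-1.
apply: (@le_trans _ _ (\sum_(j < J) m.+2%:R * (f j - f j.+1))).
  apply: ler_sum => j _; have jS := ltnW (geom_grid_ltS m j).
  have fS : f j.+1 <= f j.
    rewrite lef_pV2 ?posrE ?ltr0n ?leq_max ?y0 // ler_nat.
    by rewrite geq_max leq_maxl leq_max jS orbT.
  case: ifP => [yj|_]; last by rewrite mulr_ge0 ?subr_ge0.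
  rewrite /f (maxn_idPr yj) (maxn_idPr (leq_trans yj jS)) -natr1.
  apply: inv_le_telescope; rewrite ?ltr0n ?geom_grid_gt0 // natr1 -!natrM ler_nat.
  exact: geom_grid_ratio.
rewrite -big_distrr /= ler_pM2l ?ltr0n // -(big_mkord xpredT (fun j => f j - f j.+1)).
have -> : \sum_(0 <= j < J) (f j - f j.+1) = f 0%N - f J.
  by rewrite -[RHS]opprB -telescope_sumr // -sumrN; apply: eq_bigr => j _; rewrite opprB.
by rewrite /f /= (maxn_idPl y0) lerBlDr lerDl invr_ge0.
Qed.

End geom_grid_sums.

Definition trunc (n x : nat) : nat := if (x <= n)%N then x else 0%N.

Definition trunc_sum (a : nat -> nat) (n : nat) : nat :=
  (\sum_(1 <= k < n.+1) trunc k (a k))%N.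

Lemma trunc_le n x : (trunc n x <= n)%N.
Proof. by rewrite /trunc; case: ifP. Qed.

Lemma trunc_sumS a n : trunc_sum a n.+1 = (trunc_sum a n + trunc n.+1 (a n.+1))%N.
Proof. by rewrite /trunc_sum big_nat_recr. Qed.

Lemma trunc_sum_homo a : {homo trunc_sum a : n n' / (n <= n')%N}.
Proof.
move=> n n' /subnK <-; elim: (n' - n)%N => [//|i IH].
by rewrite addSn trunc_sumS (leq_trans IH) ?leq_addr.
Qed.

Lemma sum_le_trunc_sum a K : (forall k, (K <= k)%N -> (a k <= k)%N) -> forall n,
  (\sum_(1 <= k < n.+1) a k <= \sum_(1 <= k < K) a k + trunc_sum a n)%N.
Proof.
move=> aK; elim=> [|n IH]; first by rewrite big_geq.
have [Kn|nK] := leqP K n.+1; last first.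
  by rewrite (@big_cat_nat _ _ _ n.+2 1 K) //=; lia.
rewrite big_nat_recr //= trunc_sumS /trunc aK //; lia.
Qed.

Section limsup_of_averages.
Variable R : realType.

Lemma limn_esup_le_near (u : R^nat) (r c : R) :
  (forall m, \forall n \near \oo, u n <= r + c / m.+1%:R) ->
  (limn_esup (fun n => (u n)%:E) <= r%:E)%E.
Proof.
move=> hu; rewrite limn_esup_lim; apply/lee_addgt0Pr => e e0.
have [m cme] : exists m, c / m.+1%:R <= e.
  exists (Num.truncn (c / e)); rewrite ler_pdivrMr ?ltr0n // [e * _]mulrC.
  by rewrite -ler_pdivrMr // ltW // truncnS_gt.
have [N _ hN] := hu m; apply: lime_le; first exact: is_cvg_esups.
exists N => // n /= Nn; apply: ge_ereal_sup => _ [k /= nk <-].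
by rewrite lee_fin (le_trans (hN k (leq_trans Nn nk))) ?lerD2l.
Qed.

Lemma le_geom_grid_interpolation (s : nat -> R) (r : R) m J :
  0 <= r -> {homo s : a b / (a <= b)%N >-> a <= b} ->
  (forall j, (J <= j)%N -> s (geom_grid m j) <= (geom_grid m j)%:R * (r + m.+1%:R^-1)) ->
  forall n, (geom_grid m J <= n)%N -> s n <= n%:R * (r + (r + 2) / m.+1%:R) + (r + 1).
Proof.
move=> r0 s_homo sJ n /geom_grid_bracket[j [Jj jn nj]].
set dl : R := m.+1%:R^-1.
have dl0 : 0 < dl by rewrite invr_gt0 ltr0n.
have dl1 : dl <= 1 by rewrite invf_le1 ?ltr0n // ler1n.
have grid_step : (geom_grid m j.+1)%:R <= n%:R * (1 + dl) + 1 :> R.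
  have jdiv : (geom_grid m j %/ m.+1)%:R <= (geom_grid m j)%:R * dl :> R.
    by rewrite ler_pdivlMr ?ltr0n // -natrM ler_nat leq_divM.
  have jnR : (geom_grid m j)%:R <= n%:R :> R by rewrite ler_nat.
  rewrite /= !natrD; nra.
have s_n : s n <= (geom_grid m j.+1)%:R * (r + dl).
  exact: le_trans (s_homo _ _ (ltnW nj)) (sJ _ (leq_trans Jj (leqnSn j))).
have ndl : 0 <= n%:R * dl by rewrite mulr_ge0 // ltW.
rewrite mulrC -/dl; nra.
Qed.

Lemma limn_esup_avg_le (a : nat -> nat) (r : R) : 0 <= r ->
  (\forall k \near \oo, (a k <= k)%N) ->
  (forall m, \forall j \near \oo,
     (trunc_sum a (geom_grid m j))%:R <= (geom_grid m j)%:R * (r + m.+1%:R^-1)) ->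
  (limn_esup (fun n => ((n%:R)^-1 * \sum_(1 <= k < n.+1) (a k)%:R)%:E) <= r%:E)%E.
Proof.
move=> r0 [K _ aK] hs; apply: (@limn_esup_le_near _ _ (r + 3)) => m.
have [J _ sJ] := hs m; set C := (\sum_(1 <= k < K) a k)%N.
near=> n.
have Jn : (geom_grid m J <= n)%N by near: n; exact: nbhs_infty_ge.
have n0 : 0 < n%:R :> R by rewrite ltr0n; near: n; exact: nbhs_infty_gt.
have C_le : C%:R + r + 1 <= n%:R / m.+1%:R :> R.
  by rewrite ler_pdivlMr ?ltr0n //; near: n; exact: nbhs_infty_ger.
have sum_le : \sum_(1 <= k < n.+1) (a k)%:R <= C%:R + (trunc_sum a n)%:R :> R.
  by rewrite -natr_sum -natrD ler_nat sum_le_trunc_sum.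
have s_homo : {homo (fun n => (trunc_sum a n)%:R : R) : x y / (x <= y)%N >-> x <= y}.
  by move=> x y xy; rewrite ler_nat trunc_sum_homo.
have := le_geom_grid_interpolation r0 s_homo sJ Jn.
set D := n%:R / m.+1%:R in C_le *.
have expand c : n%:R * (r + (r + c) / m.+1%:R) = n%:R * r + r * D + c * D.
  by rewrite /D; ring.
rewrite ler_pdivrMl // !expand; lra.
Unshelve. all: by end_near.
Qed.
End limsup_of_averages.

Section truncated_process.
Context d (T : measurableType d) (F : nat -> set (set T)) (t : nat -> T -> nat).
Hypothesis hF : is_filtration F.
Hypothesis ht : adapted_from1 F t.

Definition Y n w := trunc n (t n w).
Definition S n w := trunc_sum (t^~ w) n.

Lemma S0 w : S 0 w = 0%N.
Proof. by rewrite /S /trunc_sum big_geq. Qed.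

Lemma SS n w : S n.+1 w = (S n w + Y n.+1 w)%N.
Proof. exact: trunc_sumS. Qed.

Lemma Y_lt n w : (Y n w < n.+1)%N.
Proof. by rewrite ltnS trunc_le. Qed.

Lemma S_lt n w : (S n w < (n * n).+1)%N.
Proof.
rewrite ltnS; elim: n => [|n IH]; first by rewrite S0.
by rewrite SS; have := Y_lt n.+1 w; rewrite mulSn mulnS; lia.
Qed.

Lemma Y_adapted n B : (1 <= n)%N -> F n (Y n @^-1` B).
Proof. by move=> n1; apply: (ht n1 (trunc n @^-1` B)). Qed.

Lemma S_adapted n B : F n (S n @^-1` B).
Proof.
have saF := filtration_sigma hF.
elim: n B => [|n IH] B.
  have [B0|B0] := pselect (B 0%N).
    rewrite (_ : _ @^-1` _ = setT); first exact: sa_setT.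
    by apply/seteqP; split => // w _; rewrite /preimage /= S0.
  rewrite (_ : _ @^-1` _ = set0); first exact: sa_set0.
  by apply/seteqP; split => // w; rewrite /preimage /= S0.
rewrite (_ : _ @^-1` _ =
    \bigcup_i (S n @^-1` (fun a => B (a + i)%N) `&` Y n.+1 @^-1` [set i])).
  apply: sa_bigcup => // i; apply: sa_setI => //; last exact: Y_adapted.
  exact: (filtration_homo hF (leqnSn n)).
apply/seteqP; split => w /=; first by rewrite SS => Bw; exists (Y n.+1 w).
by move=> [i _ [/= Bi Yi]]; rewrite SS Yi.
Qed.

Lemma measurable_S n B : measurable (S n @^-1` B).
Proof. exact/(filtration_measurable hF)/S_adapted. Qed.

Lemma measurable_Y n B : (1 <= n)%N -> measurable (Y n @^-1` B).
Proof. by move=> n1; apply/(filtration_measurable hF)/Y_adapted. Qed.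

End truncated_process.

Lemma sqr_max_shift (R : realDomainType) (x y r : R) : 0 <= r -> 0 <= y ->
  Num.max (x + y - r) 0 ^+ 2 + 2 * r * Num.max x 0 <=
  Num.max x 0 ^+ 2 + 2 * Num.max x 0 * y + y ^+ 2 + r ^+ 2.
Proof. by move=> r0 y0; rewrite !maxEle; case: ifP => ?; case: ifP => ?; nra. Qed.

Section truncated_process_estimates.
Context d (T : measurableType d) (R : realType) (P : probability T R)
  (F : nat -> set (set T)) (t : nat -> T -> nat) (p : nat -> R) (r : R).
Hypothesis hF : is_filtration F.
Hypothesis ht : adapted_from1 F t.
Hypothesis p_ge0 : forall k, 0 <= p k.
Hypothesis hb : cond_prob_bound P F t p.
Hypothesis hr : forall N, \sum_(k < N) k%:R * p k <= r.

Local Notation pr := (pr P).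
Local Notation S := (S t).
Local Notation Y := (Y t).

Lemma r_ge0 : 0 <= r.
Proof. by have := hr 0; rewrite big_ord0. Qed.

Let mS n a : measurable [set w | S n w = a].
Proof. exact: (measurable_S hF ht n [set a]). Qed.

Let mY n y : measurable [set w | Y n.+1 w = y].
Proof. exact: (measurable_Y hF ht [set y] (ltn0Sn n)). Qed.

Lemma pr_Y_cond_le n A k : F n A -> (1 <= k <= n.+1)%N ->
  pr (A `&` [set w | Y n.+1 w = k]) <= p k * pr A.
Proof.
move=> FA /andP[k1 kn]; have mA := filtration_measurable hF FA.
have -> : A `&` [set w | Y n.+1 w = k] = A `&` [set w | t n.+1 w = k].
  apply/seteqP; split => w [Aw /=]; rewrite /Y /trunc; last by move=> ->; rewrite kn.
  by case: ifP => // _ k0; move: k1; rewrite -k0.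
rewrite -lee_fin EFinM -!prE //; first exact: hb.
by apply: measurableI mA _; apply/(filtration_measurable hF)/(ht _ [set k]).
Qed.

Definition excess n (a : nat) : R := Num.max (a%:R - n%:R * r) 0.

Definition excess_moment n :=
  \sum_(b < (n * n).+1) excess n b ^+ 2 * pr [set w | S n w = b].

Definition moment2 n := \sum_(y < n.+1) y%:R ^+ 2 * p y.

Definition joint n a y := pr ([set w | S n w = a] `&` [set w | Y n.+1 w = y]).

Definition expect_SY n (g : nat -> nat -> R) :=
  \sum_(a < (n * n).+1) \sum_(y < n.+2) g a y * joint n a y.

Lemma excess_ge0 n a : 0 <= excess n a.
Proof. by rewrite /excess le_max lexx orbT. Qed.

Lemma excess_step n a y :
  excess n.+1 (a + y) ^+ 2 + 2 * r * excess n a <=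
  excess n a ^+ 2 + 2 * excess n a * y%:R + y%:R ^+ 2 + r ^+ 2.
Proof.
rewrite /excess natrD -addn1 natrD mulrDl mul1r.
have -> : a%:R + y%:R - (n%:R * r + r) = a%:R - n%:R * r + y%:R - r by ring.
exact: sqr_max_shift r_ge0 (ler0n _ _).
Qed.

Lemma sum_joint_Y n a : \sum_(y < n.+2) joint n a y = pr [set w | S n w = a].
Proof. by rewrite (pr_sum_fibers P (mS n a) (@mY n) (Y_lt t n.+1)). Qed.

Lemma sum_joint_S n y : \sum_(a < (n * n).+1) joint n a y = pr [set w | Y n.+1 w = y].
Proof.
rewrite (pr_sum_fibers P (mY n y) (@mS n) (S_lt t n)).
by apply: eq_bigr => a _; rewrite /joint setIC.
Qed.

Lemma sum_pr_S n : \sum_(a < (n * n).+1) pr [set w | S n w = a] = 1.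
Proof.
rewrite -(prT P) (pr_sum_fibers P measurableT (@mS n) (S_lt t n)).
by apply: eq_bigr => a _; rewrite setTI.
Qed.

Lemma expect_SY_le n g h : (forall a y, g a y <= h a y) -> expect_SY n g <= expect_SY n h.
Proof.
by move=> gh; do 2 (apply: ler_sum => ? _); rewrite ler_wpM2r ?pr_ge0.
Qed.

Lemma expect_SYD n g h :
  expect_SY n (fun a y => g a y + h a y) = expect_SY n g + expect_SY n h.
Proof.
rewrite /expect_SY -big_split; apply: eq_bigr => a _.
by rewrite -big_split; apply: eq_bigr => y _; rewrite mulrDl.
Qed.

Lemma expect_SY_S n (g : nat -> R) :
  expect_SY n (fun a _ => g a) = \sum_(a < (n * n).+1) g a * pr [set w | S n w = a].
Proof. by apply: eq_bigr => a _; rewrite -big_distrr sum_joint_Y. Qed.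

Lemma pr_SS n b : pr [set w | S n.+1 w = b] =
  \sum_(a < (n * n).+1) \sum_(y < n.+2) (if b == (a + y)%N then joint n a y else 0).
Proof.
rewrite (pr_sum_fibers P (mS n.+1 b) (@mS n) (S_lt t n)); apply: eq_bigr => a _.
rewrite (pr_sum_fibers P (measurableI _ _ (mS n.+1 b) (mS n a)) (@mY n) (Y_lt t n.+1)).
apply: eq_bigr => y _; rewrite /joint; case: eqP => [->|ne].
  congr pr; apply/seteqP; split => [w [[]]//|w [/= Sa Yy]].
  by split => //; split => //=; rewrite SS Sa Yy.
rewrite (_ : _ `&` _ = set0) ?pr0 //.
by apply/seteqP; split => // w [[/= Sb Sa] Yy]; apply: ne; rewrite -Sb SS Sa Yy.
Qed.

Lemma excess_momentS n :
  excess_moment n.+1 = expect_SY n (fun a y => excess n.+1 (a + y) ^+ 2).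
Proof.
rewrite /excess_moment; under eq_bigr do rewrite pr_SS big_distrr /=.
rewrite exchange_big /=; apply: eq_bigr => a _.
under eq_bigr do rewrite big_distrr /=.
rewrite exchange_big /=; apply: eq_bigr => y _.
rewrite (eq_bigr (fun b : 'I__ => if b == (a + y)%N :> nat
    then excess n.+1 b ^+ 2 * joint n a y else 0)); last first.
  by move=> b _; case: eqP => _; rewrite ?mulr0.
rewrite -big_mkcond (big_ord1_eq _ (fun b => excess n.+1 b ^+ 2 * joint n a y)) ifT //.
by have := ltn_ord a; have := ltn_ord y; rewrite !ltnS mulSn mulnS; lia.
Qed.

Lemma sum_Y_joint_le n a :
  \sum_(y < n.+2) y%:R * joint n a y <= r * pr [set w | S n w = a].
Proof.
apply: (@le_trans _ _ (\sum_(y < n.+2) y%:R * p y * pr [set w | S n w = a])).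
  apply: ler_sum => y _; have [->|y0] := posnP y; first by rewrite !mul0r.
  rewrite -mulrA ler_wpM2l //.
  by apply: pr_Y_cond_le; [exact: (S_adapted hF ht n [set a])|rewrite y0 -ltnS ltn_ord].
by rewrite -big_distrl /= ler_wpM2r ?pr_ge0 ?hr.
Qed.

Lemma expect_SY_cross_le n :
  expect_SY n (fun a y => 2 * excess n a * y%:R) <=
  2 * r * \sum_(a < (n * n).+1) excess n a * pr [set w | S n w = a].
Proof.
rewrite big_distrr /=; apply: ler_sum => a _.
under eq_bigr do rewrite -mulrA.
have -> : 2 * r * (excess n a * pr [set w | S n w = a]) =
    2 * excess n a * (r * pr [set w | S n w = a]) by ring.
by rewrite -big_distrr ler_wpM2l ?mulr_ge0 ?excess_ge0 ?sum_Y_joint_le.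
Qed.

Lemma expect_SY_sqr_le n : expect_SY n (fun _ y => y%:R ^+ 2) <= moment2 n.+1.
Proof.
rewrite /expect_SY exchange_big /=; apply: ler_sum => y _.
rewrite -big_distrr /= sum_joint_S.
have [->|y0] := posnP y; first by rewrite expr0n /= !mul0r.
rewrite ler_wpM2l //; have := @pr_Y_cond_le n setT y (sa_setT (filtration_sigma hF n)).
by rewrite setTI (prT P) mulr1; apply; rewrite y0 -ltnS ltn_ord.
Qed.

Lemma excess_momentS_le n : excess_moment n.+1 <= excess_moment n + moment2 n.+1 + r ^+ 2.
Proof.
set Z := \sum_(a < (n * n).+1) excess n a * pr [set w | S n w = a].
have step := expect_SY_le n (fun a y => excess_step n a y).
rewrite !expect_SYD -excess_momentS !(expect_SY_S n) in step.
have lin : \sum_(a < (n * n).+1) 2 * r * excess n a * pr [set w | S n w = a] = 2 * r * Z.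
  by rewrite /Z big_distrr /=; apply: eq_bigr => a _; rewrite mulrA.
have cst : \sum_(a < (n * n).+1) r ^+ 2 * pr [set w | S n w = a] = r ^+ 2.
  by rewrite -big_distrr /= sum_pr_S mulr1.
rewrite lin cst -/(excess_moment n) in step.
have := expect_SY_cross_le n; have := expect_SY_sqr_le n; rewrite -/Z; lra.
Qed.

Lemma moment2_ge0 n : 0 <= moment2 n.
Proof. by apply: sumr_ge0 => y _; rewrite mulr_ge0 ?sqr_ge0. Qed.

Lemma moment2S n : moment2 n <= moment2 n.+1.
Proof. by rewrite /moment2 [in leRHS]big_ord_recr /= lerDl mulr_ge0 ?sqr_ge0. Qed.

Lemma excess_moment_le n : excess_moment n <= n%:R * (moment2 n + r ^+ 2).
Proof.
elim: n => [|n IH].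
  by rewrite /excess_moment big_ord1 /excess /= mul0r subr0 maxxx expr0n !mul0r.
apply: le_trans (excess_momentS_le n) _.
have := moment2S n; have := moment2_ge0 n; have := r_ge0; have := ler0n R n.
rewrite -addn1 natrD; nra.
Qed.

Lemma pr_S_gt_le_excess_moment n e : 0 < n%:R * e ->
  pr [set w | n%:R * (r + e) < (S n w)%:R] <= excess_moment n / (n%:R * e) ^+ 2.
Proof.
move=> ne0; set E := [set w | _ < _].
have mE : measurable E by exact: (measurable_S hF ht n [set b | n%:R * (r + e) < b%:R]).
rewrite (pr_sum_fibers P mE (@mS n) (S_lt t n)) /excess_moment big_distrl /=.
apply: ler_sum => b _; rewrite mulrAC.
have [Eb|nEb] := boolP (n%:R * (r + e) < b%:R); last first.
  have -> : E `&` [set w | S n w = b] = set0.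
    by apply/seteqP; split => // w [+ Sw]; rewrite /E /= Sw (negbTE nEb).
  by rewrite pr0 mulr_ge0 ?pr_ge0 ?divr_ge0 ?sqr_ge0.
have ex_ge : n%:R * e <= excess n b.
  by rewrite /excess le_max; apply/orP; left; move: Eb; rewrite mulrDr; lra.
apply: le_trans (pr_le _ _ _ (_ : _ `<=` [set w | S n w = b])) _.
- exact: measurableI.
- exact: mS.
- by move=> w [].
rewrite ler_peMl ?pr_ge0 // ler_pdivlMr ?exprn_gt0 // mul1r.
by rewrite ler_sqr ?nnegrE ?excess_ge0 ?(ltW ne0).
Qed.

Lemma pr_S_gt_le n e : (0 < n)%N -> 0 < e ->
  pr [set w | n%:R * (r + e) < (S n w)%:R] <= (moment2 n + r ^+ 2) / (n%:R * e ^+ 2).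
Proof.
move=> n0 e0; have n0R : 0 < n%:R :> R by rewrite ltr0n.
apply: le_trans (pr_S_gt_le_excess_moment (mulr_gt0 n0R e0)) _.
have -> : (moment2 n + r ^+ 2) / (n%:R * e ^+ 2) =
    n%:R * (moment2 n + r ^+ 2) / (n%:R * e) ^+ 2.
  by field; rewrite !lt0r_neq0.
by rewrite ler_pM2r ?invr_gt0 ?exprn_gt0 ?mulr_gt0 ?excess_moment_le.
Qed.

Lemma moment2_widen n K : (n < K)%N ->
  moment2 n = \sum_(y < K) (if (y <= n)%N then y%:R ^+ 2 * p y else 0).
Proof.
move=> nK; rewrite /moment2 (big_ord_widen _ (fun y => y%:R ^+ 2 * p y) nK) big_mkcond /=.
by apply: eq_bigr => y _; rewrite ltnS.
Qed.

Lemma sum_moment2_grid_le m J :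
  \sum_(j < J) moment2 (geom_grid m j) / (geom_grid m j)%:R <= m.+2%:R * r.
Proof.
pose K := (geom_grid m J).+1.
have -> : \sum_(j < J) moment2 (geom_grid m j) / (geom_grid m j)%:R =
    \sum_(j < J) \sum_(y < K) y%:R ^+ 2 * p y *
      (if (y <= geom_grid m j)%N then (geom_grid m j)%:R^-1 else 0).
  apply: eq_bigr => j _; rewrite (@moment2_widen _ K); last first.
    by rewrite ltnS geom_grid_homo // ltnW.
  by rewrite big_distrl /=; apply: eq_bigr => y _; case: ifP; rewrite ?mul0r ?mulr0.
rewrite exchange_big /=; apply: (@le_trans _ _ (\sum_(y < K) m.+2%:R * (y%:R * p y))).
  apply: ler_sum => y _; rewrite -big_distrr /=.
  have [->|y0] := posnP y; first by rewrite expr0n /= !mul0r mulr0.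
  apply: le_trans (ler_wpM2l _ (@sum_inv_geom_grid R m y J y0)) _.
    by rewrite mulr_ge0 ?sqr_ge0.
  by rewrite expr2 le_eqVlt; apply/orP; left; apply/eqP; field; rewrite pnatr_eq0 -lt0n.
by rewrite -big_distrr /= ler_wpM2l ?hr.
Qed.

Lemma sum_pr_S_grid_gt_le m e J : 0 < e ->
  \sum_(j < J) pr [set w | (geom_grid m j)%:R * (r + e) < (S (geom_grid m j) w)%:R]
  <= m.+2%:R * (r + r ^+ 2) / e ^+ 2.
Proof.
move=> e0; set n_ := geom_grid m.
apply: (@le_trans _ _ (\sum_(j < J) (moment2 (n_ j) + r ^+ 2) / ((n_ j)%:R * e ^+ 2))).
  by apply: ler_sum => j _; apply: pr_S_gt_le => //; exact: geom_grid_gt0.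
have -> : \sum_(j < J) (moment2 (n_ j) + r ^+ 2) / ((n_ j)%:R * e ^+ 2) =
    (\sum_(j < J) moment2 (n_ j) / (n_ j)%:R + r ^+ 2 * \sum_(j < J) (n_ j)%:R^-1) / e ^+ 2.
  rewrite big_distrr /= -big_split /= big_distrl /=; apply: eq_bigr => j _.
  by field; rewrite lt0r_neq0 // pnatr_eq0 -lt0n geom_grid_gt0.
have inv_le : \sum_(j < J) (n_ j)%:R^-1 <= m.+2%:R :> R.
  have := @sum_inv_geom_grid R m 1 J (ltn0Sn 0); rewrite divr1; apply: le_trans.
  rewrite le_eqVlt; apply/orP; left; apply/eqP.
  by apply: eq_bigr => j _; rewrite geom_grid_gt0.
rewrite ler_pM2r ?invr_gt0 ?exprn_gt0 // mulrDr.
have := sum_moment2_grid_le m J; have := r_ge0; nra.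
Qed.

Lemma ae_S_grid_le : {ae P, forall w, forall m, \forall j \near \oo,
  (S (geom_grid m j) w)%:R <= (geom_grid m j)%:R * (r + m.+1%:R^-1)}.
Proof.
apply: ae_foralln => m; set e : R := m.+1%:R^-1.
have e0 : 0 < e by rewrite invr_gt0 ltr0n.
pose E j := [set w | (geom_grid m j)%:R * (r + e) < (S (geom_grid m j) w)%:R].
have mE j : measurable (E j).
  exact: (measurable_S hF ht _ [set b | (geom_grid m j)%:R * (r + e) < b%:R]).
apply: filterS (ae_eventually_notin mE _).
  by move=> w; apply: filterS => j /negP; rewrite -leNgt.
rewrite (eq_eseriesr (fun j _ => prE P (mE j))).
apply: (@nneseries_lt_pinfty _ _ (m.+2%:R * (r + r ^+ 2) / e ^+ 2)) => [j|J].
  exact: pr_ge0.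
exact: sum_pr_S_grid_gt_le.
Qed.

(* [t 0] is not covered by the hypotheses, hence the condition [0 < k]. *)
Definition exceed k := [set w | (0 < k < t k w)%N].

Lemma measurable_exceed k : measurable (exceed k).
Proof.
case: k => [|k]; first by rewrite (_ : exceed 0 = set0) //; apply/seteqP; split.
exact: (filtration_measurable hF (ht (ltn0Sn k) [set i | (k.+1 < i)%N])).
Qed.

Lemma pr_exceed_le k :
  (P (exceed k) <= \sum_(0 <= i <oo) (if (k < i)%N then (p i)%:E else 0))%E.
Proof.
have ps_ge0 : (0 <= \sum_(0 <= i <oo) (if (k < i)%N then (p i)%:E else 0))%E.
  by apply: nneseries_ge0 => i _ _; case: ifP; rewrite // lee_fin.
case: k ps_ge0 => [|k] ps_ge0.
  by rewrite (_ : exceed 0 = set0) ?measure0 //; apply/seteqP; split.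
have -> : exceed k.+1 = \bigcup_(i in [set i | (k.+1 < i)%N]) [set w | t k.+1 w = i].
  apply/seteqP; split => [w /= kt|w [i /= ki ti]]; first by exists (t k.+1 w).
  by rewrite /exceed /= ti.
rewrite measure_bigcup //; last 2 first.
- by move=> i _; exact: (filtration_measurable hF (ht (ltn0Sn k) [set i])).
- by move=> i j _ _ [w [/= <- <-]].
rewrite eseries_mkcond; apply: lee_nneseries => [i _ _|i _].
  by case: ifP => // _; exact: measure_ge0.
rewrite (_ : (i \in _) = (k.+1 < i)%N); last by apply/idP/idP => [/set_mem|/mem_set].
case: ifP => // _; have := hb (ltn0Sn k) i (sa_setT (filtration_sigma hF k)).
by rewrite setTI probability_setT mule1.
Qed.

Lemma sum_exceed_lt_pinfty : (\sum_(0 <= k <oo) P (exceed k) < +oo)%E.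
Proof.
have tail_ge0 i j : (0 <= if (j < i)%N then (p i)%:E else 0)%E.
  by case: ifP; rewrite // lee_fin.
apply: (@le_lt_trans _ _ (\sum_(0 <= k <oo) \sum_(0 <= i <oo)
   (if (k < i)%N then (p i)%:E else 0))%E).
  by apply: lee_nneseries => k _; [move=> _; exact: measure_ge0|exact: pr_exceed_le].
rewrite nneseries_interchange //.
apply: (@le_lt_trans _ _ (\sum_(0 <= i <oo) ((i%:R * p i)%:E))%E).
  apply: lee_nneseries => [i _ _|i _]; first exact: nneseries_ge0.
  rewrite (nneseries_split 0 i) // add0n eseries0 ?adde0; last first.
    by move=> k ik _; rewrite ltnNge ik.
  apply: (@le_trans _ _ (\sum_(0 <= k < i) (p i)%:E)%E).
    by apply: lee_sum => k _; case: ifP; rewrite // lee_fin.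
  by rewrite sumEFin lee_fin sumr_const_nat subn0 mulr_natl.
by apply: nneseries_lt_pinfty hr => i; rewrite mulr_ge0.
Qed.

Lemma ae_eventually_t_le : {ae P, forall w, \forall k \near \oo, (t k w <= k)%N}.
Proof.
apply: filterS (ae_eventually_notin measurable_exceed _); last first.
  exact: sum_exceed_lt_pinfty.
move=> w; apply: filterS2 (nbhs_infty_gt 0) => k k0 /negP.
by rewrite /exceed /= k0 -leqNgt.
Qed.

End truncated_process_estimates.

Lemma nneseries_fin_partial_le (R : realType) (u : nat -> R) :
  (forall k, 0 <= u k) -> (\sum_(0 <= k <oo) (u k)%:E < +oo)%E ->
  exists2 r, (\sum_(0 <= k <oo) (u k)%:E = r%:E)%E & forall N, \sum_(k < N) u k <= r.
Proof.
move=> u0 fin_u; have s0 : (0 <= \sum_(0 <= k <oo) (u k)%:E)%E.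
  by apply: nneseries_ge0 => k _ _; rewrite lee_fin.
have fin_s : (\sum_(0 <= k <oo) (u k)%:E)%E \is a fin_num by rewrite ge0_fin_numE.
exists (fine (\sum_(0 <= k <oo) (u k)%:E)%E); first by rewrite fineK.
move=> N; rewrite -lee_fin fineK // -sumEFin -(big_mkord xpredT (fun k => (u k)%:E)).
by apply: nneseries_lim_ge => k _ _; rewrite lee_fin.
Qed.

Unset Implicit Arguments.

Theorem proposition6p4 (d : measure_display) (T : measurableType d)
  (R : realType) (P : probability T R) (F : nat -> set (set T))
  (t : nat -> T -> nat) (p : nat -> R) :
  is_filtration F ->
  adapted_from1 F t ->
  (forall k, 0 <= p k <= 1) ->
  cond_prob_bound P F t p ->
  (\sum_(1 <= k <oo) ((k%:R * p k)%:E) < +oo)%E ->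
  {ae P, forall w,
     (limn_esup (fun n => ((n%:R)^-1 * (\sum_(1 <= k < n.+1) (t k w)%:R))%:E)
      <= \sum_(1 <= k <oo) ((k%:R * p k)%:E))%E}.
Proof.
move=> hF ht hp hb hR.
have p_ge0 k : 0 <= p k by case/andP: (hp k).
have kp_ge0 k : 0 <= k%:R * p k by rewrite mulr_ge0.
have from0 : (\sum_(1 <= k <oo) (k%:R * p k)%:E = \sum_(0 <= k <oo) (k%:R * p k)%:E)%E.
  by rewrite nneseries_recl ?mul0r ?add0e // => k _; rewrite lee_fin.
rewrite from0 in hR *; have [r -> hr] := nneseries_fin_partial_le kp_ge0 hR.
apply: filterS2 (ae_eventually_t_le hF ht p_ge0 hb hr) (ae_S_grid_le hF ht p_ge0 hb hr).
by move=> w t_le S_le; apply: limn_esup_avg_le (r_ge0 hr) t_le S_le.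
Qed.
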